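(* Let $1\le\ell\le n$, let $u,e\in\mathbb{R}^{\binom{n}{\ell}}$ and $v=u+e$. Then \[\|\mathbf{V}(v)-\mathbf{V}(u)\|_F^2 \le 3\ell^2\|e\|^2\big(2\|u\|^2+\|e\|^2\big).\] In particular, if $v_0\in\mathbb{R}^{\binom{n}{\ell}}$ is a unit vector and $v_0 = v^{(m)} + v^\perp$ with $v^{(m)}$ orthogonal to $v^\perp$, then $\|\mathbf{V}(v_0)-\mathbf{V}(v^{(m)})\|_F^2\le 9\ell^2\|v^\perp\|^2$.
   Context: Vectors in $\mathbb{R}^{\binom{n}{\ell}}$ are indexed by subsets $S\subseteq[n]$ with $|S|=\ell$. For such a vector $v$, the voting matrix $\mathbf{V}(v)$ is the symmetric $n\times n$ matrix with $\mathbf{V}_{ii}(v)=0$ and, for $i\ne j$, $\mathbf{V}_{ij}(v)=\frac12\sum_{|S|=|T|=\ell} v_Sv_T\mathbf{1}_{S\triangle T=\{i,j\}}$. $\|\cdot\|_F$ is the Frobenius norm. *)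

From HB Require Import structures.
From mathcomp Require Import all_boot all_order all_algebra.
Set Implicit Arguments. Unset Strict Implicit. Unset Printing Implicit Defensive.
Import Order.TTheory GRing.Theory Num.Theory.
Local Open Scope ring_scope.

(* Index set of R^{binom n l}: the l-element subsets of [n] = 'I_n. *)
Definition lsub (n l : nat) := {S : {set 'I_n} | #|S| == l}.

Definition lvec (R : realFieldType) (n l : nat) := lsub n l -> R.

Definition sqnorm (R : realFieldType) n l (v : lvec R n l) : R :=
  \sum_(S : lsub n l) v S ^+ 2.

Definition dotv (R : realFieldType) n l (u w : lvec R n l) : R :=
  \sum_(S : lsub n l) u S * w S.

Definition voting (R : realFieldType) n l (v : lvec R n l) : 'M[R]_n :=
  \matrix_(i < n, j < n)
    if i == j then 0
    else 2^-1 * \sum_(S : lsub n l) \sum_(T : lsub n l)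
        (if ((val S :\: val T) :|: (val T :\: val S)) == [set i; j]
         then v S * v T else 0).

Definition sqfrob (R : realFieldType) n (A : 'M[R]_n) : R :=
  \sum_(i < n) \sum_(j < n) A i j ^+ 2.

From HB Require Import structures.
From mathcomp Require Import all_boot all_order all_algebra.
From mathcomp Require Import ring lra.
Import Order.TTheory GRing.Theory Num.Theory.
Set Implicit Arguments. Unset Strict Implicit. Unset Printing Implicit Defensive.
Local Open Scope ring_scope.

(* Write V(v)_ij = B(v,v)_ij / 2, where the bilinear form B(x,y)_ij pairs x_S with
   y_T whenever S and T differ exactly in {i, j}.  As |S| = |T|, such a pair
   exchanges one of i, j for the other, so B = P_ij + P_ji, where P(x,y)_ij only
   pairs S containing i with the unique T = S - i + j.  Cauchy-Schwarz over this
   matching gives P(x,y)_ij^2 <= m_x(i) m_y(j) with m_x(i) = sum_{S containing i} x_S^2,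
   and sum_i m_x(i) = l |x|^2.  Since V(u+e) - V(u) = B(u,e) + B(e,e)/2 entrywise,
   an elementary quadratic bound yields the estimate; for the second claim,
   |v^(m)|^2 + |v^perp|^2 = 1 turns 2|u|^2 + |e|^2 into at most 3. *)

Section FiniteSums.
Variable R : realFieldType.

Lemma CauchySchwarz_sum (I : finType) (f g : I -> R) :
  (\sum_k f k * g k) ^+ 2 <= (\sum_k f k ^+ 2) * (\sum_k g k ^+ 2).
Proof.
have lagrange : \sum_k \sum_m (f k * g m - f m * g k) ^+ 2
    = (\sum_k f k ^+ 2) * (\sum_m g m ^+ 2) + (\sum_k g k ^+ 2) * (\sum_m f m ^+ 2)
      - 2%:R * (\sum_k f k * g k) * (\sum_m f m * g m).
  rewrite -mulrA !big_distrlr mulr_sumr -big_split -sumrB; apply: eq_bigr => k _.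
  rewrite mulr_sumr -big_split -sumrB; apply: eq_bigr => m _ /=; ring.
have : 0 <= \sum_k \sum_m (f k * g m - f m * g k) ^+ 2.
  by do 2!apply: sumr_ge0 => ? _; apply: sqr_ge0.
rewrite lagrange [_ * (\sum_m f m ^+ 2)]mulrC -mulrA -expr2; lra.
Qed.

Lemma sumr_unique_le (I : finType) (c : pred I) (a : R) :
  (forall k1 k2, c k1 -> c k2 -> k1 = k2) -> 0 <= a -> \sum_(k | c k) a <= a.
Proof.
move=> c_uniq a_ge0; rewrite sumr_const.
have : (#|c| <= 1)%N by apply/card_le1_eqP => k1 k2 ck1 ck2; exact: c_uniq ck2 ck1.
by case: #|c| => [|[|]] // _; rewrite ?mulr0n ?mulr1n.
Qed.

Lemma matching_sum_sqr_le (I J : finType) (r : I -> J -> bool)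
    (p : pred I) (q : pred J) (x : I -> R) (y : J -> R) :
  (forall i j, r i j -> p i && q j) ->
  (forall i j1 j2, r i j1 -> r i j2 -> j1 = j2) ->
  (forall i1 i2 j, r i1 j -> r i2 j -> i1 = i2) ->
  (\sum_i \sum_j (if r i j then x i * y j else 0)) ^+ 2
    <= (\sum_(i | p i) x i ^+ 2) * (\sum_(j | q j) y j ^+ 2).
Proof.
move=> r_pq r_fun r_inj.
pose xr i j := if r i j then x i else 0.
pose yr i j := if r i j then y j else 0.
have := CauchySchwarz_sum (fun ij : I * J => xr ij.1 ij.2) (fun ij => yr ij.1 ij.2).
rewrite -(pair_bigA _ (fun i j => xr i j * yr i j)) -(pair_bigA _ (fun i j => xr i j ^+ 2)).
rewrite -(pair_bigA _ (fun i j => yr i j ^+ 2)).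
have -> : \sum_i \sum_j (if r i j then x i * y j else 0) = \sum_i \sum_j xr i j * yr i j.
  by do 2!apply: eq_bigr => ? _; rewrite /xr /yr; case: ifP; rewrite ?mulr0.
move/le_trans; apply; apply: ler_pM; try by do 2!apply: sumr_ge0 => ? _; apply: sqr_ge0.
- rewrite [leRHS]big_mkcond; apply: ler_sum => i _.
  have -> : \sum_j xr i j ^+ 2 = \sum_(j | r i j) x i ^+ 2.
    by rewrite [RHS]big_mkcond; apply: eq_bigr => j _; rewrite /xr; case: ifP; rewrite ?expr0n.
  case: ifP => [_|not_pi]; first exact: sumr_unique_le (r_fun i) (sqr_ge0 _).
  by rewrite big_pred0 // => j; apply/negbTE/negP => /r_pq; rewrite not_pi.
- rewrite exchange_big [leRHS]big_mkcond; apply: ler_sum => j _.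
  have -> : \sum_i yr i j ^+ 2 = \sum_(i | r i j) y j ^+ 2.
    by rewrite [RHS]big_mkcond; apply: eq_bigr => i _; rewrite /yr; case: ifP; rewrite ?expr0n.
  case: ifP => [_|not_qj]; first exact: sumr_unique_le (fun i1 i2 => r_inj i1 i2 j) (sqr_ge0 _).
  by rewrite big_pred0 // => i; apply/negbTE/negP => /r_pq; rewrite not_qj andbF.
Qed.

End FiniteSums.

Section SymmetricDifference.
Variable T : finType.
Implicit Types A B C : {set T}.

Definition symdiff A B := (A :\: B) :|: (B :\: A).

Lemma in_symdiff A B x : (x \in symdiff A B) = (x \in A) (+) (x \in B).
Proof. by rewrite !inE; case: (x \in A); case: (x \in B). Qed.

Lemma symdiffC A B : symdiff A B = symdiff B A.
Proof. by rewrite /symdiff setUC. Qed.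

Lemma symdiff_inj A : injective (symdiff A).
Proof.
move=> B C /setP eqBC; apply/setP => x.
by have := eqBC x; rewrite !in_symdiff => /(congr1 (addb (x \in A))); rewrite !addKb.
Qed.

Lemma eq_card_symdiff_subset A B :
  #|A| = #|B| -> symdiff A B \subset A -> A = B.
Proof.
move=> cardAB sub_dA; apply/esym/eqP; rewrite eqEcard -cardAB leqnn andbT.
apply/subsetP => x xB; have := subsetP sub_dA x; rewrite in_symdiff xB addbT.
by case: (x \in A) => // /(_ isT).
Qed.

Lemma symdiff_pair_cases A B i j :
  #|A| = #|B| -> symdiff A B = [set i; j] ->
  (i \in A) && (j \in B) (+) (j \in A) && (i \in B).
Proof.
have pair_sub_eq (C D : {set T}) : #|C| = #|D| -> symdiff C D = [set i; j] ->
    i \in C -> j \in C -> C = D.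
  move=> cardCD dCD iC jC; apply: eq_card_symdiff_subset => //.
  by rewrite dCD subUset !sub1set iC jC.
move=> cardAB dAB; have := set21 i j; have := set22 i j; rewrite -dAB !in_symdiff.
case iA: (i \in A); case iB: (i \in B); case jA: (j \in A); case jB: (j \in B) => //= _ _.
- by move: iB; rewrite -(pair_sub_eq _ _ cardAB dAB iA jA) iA.
- have dBA : symdiff B A = [set i; j] by rewrite symdiffC.
  by move: iA; rewrite -(pair_sub_eq _ _ (esym cardAB) dBA iB jB) iB.
Qed.

End SymmetricDifference.

Lemma sqr_add_half_le (R : realFieldType) (p q r s : R) :
  (p + q + (r + s) / 2%:R) ^+ 2
    <= 3%:R * (p ^+ 2 + q ^+ 2) + 3%:R / 2%:R * (r ^+ 2 + s ^+ 2).
Proof.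
have := sqr_ge0 (p - q); have := sqr_ge0 (r - s); have := sqr_ge0 (p + q - (r + s)).
nra.
Qed.

Section VotingMatrix.
Variables (R : realFieldType) (n l : nat).
Implicit Types (x y u e v : lvec R n l) (S T : lsub n l) (i j : 'I_n).

Lemma card_lsub S : #|val S| = l.
Proof. exact: eqP (valP S). Qed.

Lemma sqnorm_ge0 x : 0 <= sqnorm x.
Proof. by apply: sumr_ge0 => S _; apply: sqr_ge0. Qed.

Lemma sqnormDd u e v : (forall S, v S = u S + e S) -> dotv u e = 0 ->
  sqnorm v = sqnorm u + sqnorm e.
Proof.
move=> vE ue0; rewrite -[RHS]addr0 -(mulr0 2%:R) -ue0 /sqnorm /dotv mulr_sumr -!big_split.
by apply: eq_bigr => S _ /=; rewrite vE; ring.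
Qed.

Definition exchange S T i j :=
  [&& i \in val S, j \in val T & symdiff (val S) (val T) == [set i; j]].

Definition pair_vote x y i j := \sum_(S : lsub n l) \sum_(T : lsub n l)
  (if symdiff (val S) (val T) == [set i; j] then x S * y T else 0).

Definition exchange_vote x y i j := \sum_(S : lsub n l) \sum_(T : lsub n l)
  (if exchange S T i j then x S * y T else 0).

Definition mass_at x i := \sum_(S : lsub n l | i \in val S) x S ^+ 2.

Lemma votingE v i j : voting v i j = if i == j then 0 else 2^-1 * pair_vote v v i j.
Proof. by rewrite mxE. Qed.

Lemma pair_voteC x y i j : pair_vote y x i j = pair_vote x y i j.
Proof.
rewrite /pair_vote exchange_big; apply: eq_bigr => S _; apply: eq_bigr => T _.
by rewrite symdiffC mulrC.
Qed.

Lemma pair_vote_expand u e v i j : (forall S, v S = u S + e S) ->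
  pair_vote v v i j - pair_vote u u i j
    = pair_vote u e i j + pair_vote e u i j + pair_vote e e i j.
Proof.
move=> vE; rewrite /pair_vote -!big_split -sumrB; apply: eq_bigr => S _.
rewrite -!big_split -sumrB; apply: eq_bigr => T _ /=.
by case: ifP => _; rewrite ?vE; [ring | rewrite !addr0 subrr].
Qed.

Lemma pair_vote_exchange x y i j :
  pair_vote x y i j = exchange_vote x y i j + exchange_vote x y j i.
Proof.
rewrite /pair_vote /exchange_vote -big_split; apply: eq_bigr => S _.
rewrite -big_split; apply: eq_bigr => T _ /=.
rewrite /exchange [[set j; i]]setUC.
case: eqP => [dST|_]; last by rewrite !andbF addr0.
have := symdiff_pair_cases (etrans (card_lsub S) (esym (card_lsub T))) dST.
by rewrite !andbT; case: (_ && _); case: (_ && _) => //= _; rewrite ?addr0 ?add0r.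
Qed.

Lemma exchange_vote_sqr_le x y i j :
  exchange_vote x y i j ^+ 2 <= mass_at x i * mass_at y j.
Proof.
apply: matching_sum_sqr_le => [S T | S T1 T2 | S1 S2 T].
- by case/and3P => -> ->.
- case/and3P => _ _ /eqP d1 /and3P[_ _ /eqP d2].
  by apply/val_inj/(@symdiff_inj _ (val S)); rewrite d1 d2.
- case/and3P => _ _ /eqP d1 /and3P[_ _ /eqP d2].
  by apply/val_inj/(@symdiff_inj _ (val T)); rewrite symdiffC d1 symdiffC d2.
Qed.

Lemma sum_mass_at x : \sum_i mass_at x i = l%:R * sqnorm x.
Proof.
rewrite /mass_at (exchange_big_dep xpredT) //= /sqnorm mulr_sumr.
by apply: eq_bigr => S _; rewrite sumr_const card_lsub mulr_natl.
Qed.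

Lemma sum_exchange_vote_sqr_le x y :
  \sum_i \sum_j exchange_vote x y i j ^+ 2 <= l%:R ^+ 2 * (sqnorm x * sqnorm y).
Proof.
apply: le_trans (_ : _ <= \sum_i \sum_j mass_at x i * mass_at y j) _.
  by do 2!apply: ler_sum => ? _; apply: exchange_vote_sqr_le.
by rewrite -big_distrlr /= !sum_mass_at expr2 mulrACA.
Qed.

Lemma sqr_voting_sub_le u e v i j : (forall S, v S = u S + e S) ->
  (voting v - voting u) i j ^+ 2
    <= 3%:R * (exchange_vote u e i j ^+ 2 + exchange_vote u e j i ^+ 2)
       + 3%:R / 2%:R * (exchange_vote e e i j ^+ 2 + exchange_vote e e j i ^+ 2).
Proof.
move=> vE; rewrite mxE [(- voting u) i j]mxE !votingE.
case: eqP => _.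
  by rewrite subrr expr0n; apply: le_trans (sqr_ge0 _) (sqr_add_half_le _ _ _ _).
rewrite -mulrBr (pair_vote_expand i j vE) (pair_voteC u e) !pair_vote_exchange.
have half_double (a b : R) : 2^-1 * (a + a + b) = a + b / 2%:R by field.
by rewrite half_double; apply: sqr_add_half_le.
Qed.

Lemma sqfrob_voting_sub_le u e v : (forall S, v S = u S + e S) ->
  sqfrob (voting v - voting u)
    <= 3%:R * l%:R ^+ 2 * sqnorm e * (2%:R * sqnorm u + sqnorm e).
Proof.
move=> vE; pose sumsq x y := \sum_i \sum_j exchange_vote x y i j ^+ 2.
have sumsq_tr x y : \sum_i \sum_j exchange_vote x y j i ^+ 2 = sumsq x y.
  exact: exchange_big.
rewrite /sqfrob; apply: le_trans.
  by do 2!apply: ler_sum => ? _; exact: sqr_voting_sub_le vE.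
under eq_bigr => i _ do rewrite big_split /= -!mulr_sumr !big_split /=.
have := sum_exchange_vote_sqr_le u e; have := sum_exchange_vote_sqr_le e e.
rewrite big_split /= -!mulr_sumr !big_split /= !sumsq_tr -/(sumsq u e) -/(sumsq e e).
lra.
Qed.

End VotingMatrix.

Theorem lemma5 (R : realFieldType) (n l : nat) (hl1 : (1 <= l)%N) (hln : (l <= n)%N) :
  (forall u e : lvec R n l,
     let v := fun S => u S + e S in
     sqfrob (voting v - voting u)
       <= 3%:R * (l%:R) ^+ 2 * sqnorm e * (2%:R * sqnorm u + sqnorm e))
  /\
  (forall v0 vm vp : lvec R n l,
     sqnorm v0 = 1 ->
     (forall S, v0 S = vm S + vp S) ->
     dotv vm vp = 0 ->
     sqfrob (voting v0 - voting vm) <= 9%:R * (l%:R) ^+ 2 * sqnorm vp).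
Proof.
split=> [u e | v0 vm vp v0_unit v0E orth]; first exact: sqfrob_voting_sub_le (fun S => erefl).
apply: le_trans (sqfrob_voting_sub_le v0E) _.
rewrite [leRHS](_ : _ = 3%:R * l%:R ^+ 2 * sqnorm vp * 3%:R); last by ring.
apply: ler_wpM2l; first by rewrite !mulr_ge0 ?sqr_ge0 ?sqnorm_ge0.
have := sqnormDd v0E orth; have := sqnorm_ge0 vp; rewrite v0_unit; lra.
Qed.
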